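(* Let $T_{a_1\dots a_r}\neq0$ be a rank-$r$ tensor, $r\ge1$. Then $T\in\mathcal{DP}$ if and only if $T_{a_1\dots a_r}u_1^{a_1}\cdots u_r^{a_r}>0$ for every set $u_1,\dots,u_r$ of timelike future-pointing vectors.
   Context: Lorentzian metric of signature $(+,-,\dots,-)$ with time orientation; timelike: $v\cdot v>0$; causal: $v\ne0$, $v\cdot v\ge0$. $\mathcal{DP}$: tensors $T$ with $T_{a_1\dots a_r}u_1^{a_1}\cdots u_r^{a_r}\ge0$ for all causal future-pointing $u_1,\dots,u_r$. *)

(* Minkowski space R^(n+2) in an orthonormal basis e_0,...,e_(n+1)
   with metric diag(+,-,...,-) and time orientation given by e_0. *)
From HB Require Import structures.
From mathcomp Require Import all_boot all_order all_algebra.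
From mathcomp Require Import reals.
Set Implicit Arguments. Unset Strict Implicit. Unset Printing Implicit Defensive.
Import Order.TTheory GRing.Theory Num.Theory.
Local Open Scope ring_scope.

Definition vec (R : realType) (n : nat) := 'I_n.+2 -> R.

Definition mdot (R : realType) (n : nat) (u v : vec R n) : R :=
  u ord0 * v ord0 - \sum_(i : 'I_n.+2 | i != ord0) u i * v i.

Definition timelike (R : realType) (n : nat) (v : vec R n) : Prop :=
  0 < mdot v v.

Definition causal (R : realType) (n : nat) (v : vec R n) : Prop :=
  (exists i, v i != 0) /\ 0 <= mdot v v.

Definition future_pointing (R : realType) (n : nat) (v : vec R n) : Prop :=
  0 < v ord0.

(* a rank-r covariant tensor: components T_{a_1...a_r}, indices a : 'I_r -> 'I_(n+2) *)
Definition tensor (R : realType) (n r : nat) := {ffun 'I_r -> 'I_n.+2} -> R.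

Definition contract (R : realType) (n r : nat) (T : tensor R n r)
  (u : 'I_r -> vec R n) : R :=
  \sum_(a : {ffun 'I_r -> 'I_n.+2}) T a * \prod_(i < r) u i (a i).

Definition DP (R : realType) (n r : nat) (T : tensor R n r) : Prop :=
  forall u : 'I_r -> vec R n,
    (forall i, causal (u i) /\ future_pointing (u i)) -> 0 <= contract T u.

(* If T is in DP and its contraction vanishes on a tuple u of future-pointing
   timelike vectors, then perturbing one slot by +-t w keeps the tuple inside the
   open cone, so the slot-linear function t |-> contraction is >= 0 on both sides
   of 0 and hence has zero derivative: the contraction vanishes after replacing a
   slot by any vector w. Since every vector is a difference of two future-pointing
   timelike vectors, an induction over the slots shows that the contraction
   vanishes on all tuples, in particular on tuples of basis vectors, i.e. T = 0.
   Conversely, a tuple of causal future-pointing vectors is the limit of the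
   timelike future-pointing tuples u_i + e e_0 as e -> 0+, and the contraction is
   Lipschitz in e on [0, 1]. *)
From HB Require Import structures.
From mathcomp Require Import all_boot all_order all_algebra.
From mathcomp Require Import reals.
From mathcomp Require Import ring lra.
Import Order.TTheory GRing.Theory Num.Theory.
Local Open Scope ring_scope.

Lemma prod_perturb_bound (R : realFieldType) (m : nat) (x y : 'I_m -> R) (e : R) :
  0 <= e -> e <= 1 ->
  `|\prod_(i < m) (x i + e * y i)| <= \prod_(i < m) (`|x i| + `|y i|) /\
  `|\prod_(i < m) (x i + e * y i) - \prod_(i < m) x i|
    <= e * \prod_(i < m) (`|x i| + `|y i|).
Proof.
move=> e_ge0 e_le1; elim: m x y => [|m IH] x y.
  by rewrite !big_ord0 subrr normr0 normr1 mulr1.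
rewrite !big_ord_recr /=.
have [IH1 IH2] := IH (fun i => x (widen_ord (leqnSn m) i))
                     (fun i => y (widen_ord (leqnSn m) i)).
set P := \prod_(i < m) _ in IH1 IH2 *.
set Q := \prod_(i < m) x _ in IH2 *.
set M := \prod_(i < m) _ in IH1 IH2 *.
set a := x ord_max; set b := y ord_max.
have M_ge0 : 0 <= M := le_trans (normr_ge0 _) IH1.
have Nab : `|a + e * b| <= `|a| + `|b|.
  apply: le_trans (ler_normD _ _) _; rewrite lerD2l normrM (ger0_norm e_ge0).
  by rewrite -[leRHS]mul1r ler_wpM2r.
split; first by rewrite normrM; apply: ler_pM.
have -> : P * (a + e * b) - Q * a = (P - Q) * a + e * (P * b) by ring.
apply: le_trans (ler_normD _ _) _.
rewrite !normrM (ger0_norm e_ge0).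
have h1 : `|P - Q| * `|a| <= e * M * `|a| by apply: ler_wpM2r.
have h2 : e * (`|P| * `|b|) <= e * (M * `|b|) by apply/ler_wpM2l/ler_wpM2r.
rewrite (_ : e * (M * (`|a| + `|b|)) = e * M * `|a| + e * (M * `|b|)); last by ring.
exact: lerD h1 h2.
Qed.

Section Contraction.
Context {R : realType} {n r : nat}.
Implicit Types (T : tensor R n r) (u x w : 'I_r -> vec R n) (v y z : vec R n).

Definition future_timelike v := timelike v /\ future_pointing v.

Definition e0 : vec R n := fun j => (j == ord0)%:R.

Definition set_slot u k v : 'I_r -> vec R n := fun i => if i == k then v else u i.

Definition splice (m : nat) w x : 'I_r -> vec R n :=
  fun i => if (i < m)%N then w i else x i.

Lemma contract_eq T {u w} : (forall i j, u i j = w i j) -> contract T u = contract T w.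
Proof. by move=> uw; apply: eq_bigr => a _; congr (_ * _); apply: eq_bigr. Qed.

Lemma set_slot_id u k i j : set_slot u k (u k) i j = u i j.
Proof. by rewrite /set_slot; case: eqP => // ->. Qed.

Lemma prod_set_slot u k y (a : {ffun 'I_r -> 'I_n.+2}) :
  \prod_(i < r) set_slot u k y i (a i) = y (a k) * \prod_(i < r | i != k) u i (a i).
Proof.
rewrite (bigD1 k) //= /set_slot eqxx; congr (_ * _).
by apply: eq_bigr => i /negbTE ->.
Qed.

Lemma contract_set_slotD T u k y z (s : R) :
  contract T (set_slot u k (fun j => y j + s * z j)) =
  contract T (set_slot u k y) + s * contract T (set_slot u k z).
Proof.
rewrite /contract mulr_sumr -big_split /=; apply: eq_bigr => a _.
by rewrite !prod_set_slot; ring.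
Qed.

Lemma contract_basis T (a : {ffun 'I_r -> 'I_n.+2}) :
  contract T (fun i j => (j == a i)%:R) = T a.
Proof.
rewrite /contract (bigD1 a) //= [X in _ + X]big1 ?addr0.
  by rewrite big1 ?mulr1 // => i _; rewrite eqxx.
move=> b b_neq_a.
have [i bi_neq_ai|b_eq_a] := pickP (fun i => b i != a i).
  by rewrite (bigD1 i) //= (negbTE bi_neq_ai) mul0r mulr0.
suff: b = a by move=> eq_ba; rewrite eq_ba eqxx in b_neq_a.
by apply/ffunP => i; apply/eqP; move/negbFE: (b_eq_a i).
Qed.

Lemma mdot_addZ v z (s : R) :
  mdot (fun j => v j + s * z j) (fun j => v j + s * z j) =
  mdot v v + 2 * s * mdot v z + s ^+ 2 * mdot z z.
Proof.
rewrite /mdot.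
have -> : \sum_(i : 'I_n.+2 | i != ord0) (v i + s * z i) * (v i + s * z i) =
  \sum_(i : 'I_n.+2 | i != ord0) v i * v i
  + 2 * s * \sum_(i : 'I_n.+2 | i != ord0) v i * z i
  + s ^+ 2 * \sum_(i : 'I_n.+2 | i != ord0) z i * z i.
  by rewrite !mulr_sumr -!big_split; apply: eq_bigr => i _ /=; ring.
ring.
Qed.

Lemma mdot_e0 v : mdot v e0 = v ord0.
Proof. by rewrite /mdot /e0 eqxx mulr1 big1 ?subr0 // => i /negbTE ->; rewrite mulr0. Qed.

Lemma future_timelike_e0 : future_timelike e0.
Proof. by rewrite /future_timelike /timelike /future_pointing mdot_e0 /e0 eqxx ltr01. Qed.

Lemma future_timelike_causal v : future_timelike v -> causal v /\ future_pointing v.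
Proof. by move=> [tl fp]; do !split => //; [exists ord0; rewrite gt_eqF | exact: ltW]. Qed.

Lemma causal_addZ_e0 v (e : R) : causal v /\ future_pointing v -> 0 < e ->
  future_timelike (fun j => v j + e * e0 j).
Proof.
rewrite /future_timelike /timelike /future_pointing mdot_addZ !mdot_e0.
rewrite /e0 eqxx mulr1n mulr1 => -[[_ vv_ge0] v0_gt0] e_gt0.
have : 0 < e * v ord0 by rewrite mulr_gt0.
have : 0 <= e ^+ 2 by rewrite sqr_ge0.
split; lra.
Qed.

Lemma future_timelike_shift v : exists2 c : R, 0 < c &
  future_timelike (fun j => v j + c * e0 j).
Proof.
set q := mdot v v; set v0 := v ord0.
have q_ge0 : 0 <= `|q| := normr_ge0 _.
have v0_ge0 : 0 <= `|v0| := normr_ge0 _.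
have q_lb : - `|q| <= q by rewrite lerNnormlW.
have v0_lb : - `|v0| <= v0 by rewrite lerNnormlW.
pose c := `|q| + 2 * `|v0| + 1.
have c_ge1 : 1 <= c by rewrite /c; lra.
exists c; first lra.
rewrite /future_timelike /timelike /future_pointing mdot_addZ !mdot_e0.
rewrite /e0 eqxx mulr1n mulr1 -/q -/v0; split; last by rewrite /c; lra.
have cv0 : - (c * `|v0|) <= c * v0 by rewrite -mulrN ler_wpM2l //; lra.
have cq : `|q| + 1 <= c * (`|q| + 1) by rewrite ler_peMl //; lra.
have -> : c ^+ 2 = c * (`|q| + 1) + 2 * (c * `|v0|) by rewrite /c; ring.
lra.
Qed.

Lemma future_timelike_perturb y z : future_timelike y -> exists2 t : R, 0 < t &
  forall s, `|s| = t -> future_timelike (fun j => y j + s * z j).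
Proof.
rewrite /future_timelike /timelike /future_pointing => -[yy_gt0 y0_gt0].
set Q := mdot y y in yy_gt0 *; set y0 := y ord0 in y0_gt0 *.
set B := mdot y z; set q := mdot z z; set z0 := z ord0.
set K := 2 * `|B| + `|q|.
have K_ge0 : 0 <= K by rewrite /K addr_ge0 // mulr_ge0.
set a := K / Q; set b := `|z0| / y0.
have a_ge0 : 0 <= a by rewrite /a divr_ge0 // ltW.
have b_ge0 : 0 <= b by rewrite /b divr_ge0 // ltW.
set t := (1 + a + b)^-1.
have D_gt0 : 0 < 1 + a + b by lra.
have t_gt0 : 0 < t by rewrite invr_gt0.
have t_le1 : t <= 1 by rewrite invf_le1 //; lra.
have tK : t * K < Q.
  have -> : K = a * Q by rewrite /a divfK // gt_eqF.
  by rewrite mulrA -[ltRHS]mul1r ltr_pM2r // mulrC ltr_pdivrMr // mul1r; lra.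
have tz : t * `|z0| < y0.
  have -> : `|z0| = b * y0 by rewrite /b divfK // gt_eqF.
  by rewrite mulrA -[ltRHS]mul1r ltr_pM2r // mulrC ltr_pdivrMr // mul1r; lra.
exists t => // s s_t; rewrite mdot_addZ -/Q -/B -/q -/y0 -/z0; split.
  have h1 : - (2 * t * `|B|) <= 2 * s * B.
    by apply: lerNnormlW; rewrite !normrM s_t (ger0_norm (ler0n _ 2)).
  have h2 : - (t * `|q|) <= s ^+ 2 * q.
    apply: lerNnormlW; rewrite normrM normrX s_t expr2 -mulrA.
    by rewrite ler_piMl // mulr_ge0 // ltW.
  rewrite /K in tK; lra.
have : - (t * `|z0|) <= s * z0 by apply: lerNnormlW; rewrite normrM s_t.
lra.
Qed.

(* Both x_k + t y and x_k - t y lie in the cone, and the contraction is linear in t. *)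
Lemma DP_contract_eq0_set_slot T x : DP T -> (forall i, future_timelike (x i)) ->
  contract T x = 0 -> forall k y, contract T (set_slot x k y) = 0.
Proof.
move=> DP_T x_ft x0 k y.
have [t t_gt0 ft_t] := future_timelike_perturb _ y (x_ft k).
have ge0 s : `|s| = t -> 0 <= s * contract T (set_slot x k y).
  move=> s_t; have <- : contract T (set_slot x k (fun j => x k j + s * y j)) =
                        s * contract T (set_slot x k y).
    by rewrite contract_set_slotD (contract_eq T (set_slot_id x k)) x0 add0r.
  apply: DP_T => i; rewrite /set_slot.
  by case: eqP => _; apply: future_timelike_causal; [apply: ft_t | apply: x_ft].
have := ge0 t (gtr0_norm t_gt0); have := ge0 (- t).
rewrite normrN gtr0_norm // mulNr oppr_ge0 => /(_ erefl) neg pos.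
by apply/eqP; rewrite eq_le -(pmulr_rle0 _ t_gt0) -(pmulr_rge0 _ t_gt0) neg pos.
Qed.

Lemma splice_set_slot {m} w x (k : 'I_r) y : (m <= k)%N ->
  forall i j, splice m w (set_slot x k y) i j = set_slot (splice m w x) k y i j.
Proof.
move=> le_mk i j; rewrite /splice /set_slot.
by case: eqP => [->|//]; rewrite ltnNge le_mk.
Qed.

Lemma spliceS {m} w x (lt_mr : (m < r)%N) :
  forall i j, splice m.+1 w x i j = splice m w (set_slot x (Ordinal lt_mr) (w (Ordinal lt_mr))) i j.
Proof.
move=> i j; rewrite /splice /set_slot ltnS leq_eqVlt.
have [->|ne] := eqVneq i (Ordinal lt_mr); first by rewrite eqxx ltnn.
suff /negbTE -> : nat_of_ord i != m by [].
by apply: contra ne => /eqP eq_im; apply/eqP/val_inj.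
Qed.

(* Writing w_m = (w_m + c e0) - c e0 splits slot m into two future-pointing
   timelike vectors, at which the contraction vanishes by the previous lemma. *)
Lemma DP_contract_eq0_splice T : DP T -> forall m, (m <= r)%N ->
  forall x, (forall i, future_timelike (x i)) -> contract T x = 0 ->
  forall w, contract T (splice m w x) = 0.
Proof.
move=> DP_T; elim=> [|m IH] le_mr x x_ft x0 w.
  by rewrite -x0; apply: contract_eq => i j; rewrite /splice.
set k := Ordinal le_mr.
have zero_at y : future_timelike y -> contract T (splice m w (set_slot x k y)) = 0.
  move=> y_ft; apply: IH; first exact: ltnW.
    by move=> i; rewrite /set_slot; case: eqP.
  exact: DP_contract_eq0_set_slot.
have [c c_gt0 shift_ft] := future_timelike_shift (w k).
rewrite (contract_eq T (spliceS w x le_mr)).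
rewrite (contract_eq T (splice_set_slot w x k _ (leqnn m))).
have -> : contract T (set_slot (splice m w x) k (w k)) =
    contract T (set_slot (splice m w x) k (fun j => (w k j + c * e0 j) + (- c) * e0 j)).
  by apply: contract_eq => i j; rewrite /set_slot; case: eqP => // _; ring.
rewrite contract_set_slotD -!(contract_eq T (splice_set_slot w x k _ (leqnn m))).
by rewrite !zero_at ?mulr0 ?addr0 //; exact: future_timelike_e0.
Qed.

Definition perturb_bound T u (d : 'I_r -> vec R n) :=
  \sum_(a : {ffun 'I_r -> 'I_n.+2}) `|T a| * \prod_(i < r) (`|u i (a i)| + `|d i (a i)|).

Lemma perturb_bound_ge0 T u d : 0 <= perturb_bound T u d.
Proof.
rewrite sumr_ge0 // => a _; rewrite mulr_ge0 // prodr_ge0 // => i _.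
by rewrite addr_ge0.
Qed.

Lemma contract_perturb T u d {e : R} : 0 <= e -> e <= 1 ->
  `|contract T (fun i j => u i j + e * d i j) - contract T u| <= e * perturb_bound T u d.
Proof.
move=> e_ge0 e_le1; rewrite /contract /perturb_bound -sumrB mulr_sumr.
apply: le_trans (ler_norm_sum _ _ _) _; apply: ler_sum => a _.
rewrite -mulrBr normrM mulrCA; apply: ler_wpM2l => //.
by have [_ ->] := prod_perturb_bound _ _ (fun i => u i (a i)) (fun i => d i (a i)) _ e_ge0 e_le1.
Qed.

Lemma contract_ge0_perturb T u d :
  (forall e : R, 0 < e -> e <= 1 -> 0 < contract T (fun i j => u i j + e * d i j)) ->
  0 <= contract T u.
Proof.
move=> pos; rewrite leNgt; apply/negP => f_lt0.
set f := contract T u in f_lt0; set C := perturb_bound T u d.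
have C_ge0 : 0 <= C := perturb_bound_ge0 T u d.
have D_gt0 : 0 < - f + C + 1 by lra.
set e := - f / (- f + C + 1).
have e_gt0 : 0 < e by rewrite /e divr_gt0 // oppr_gt0.
have e_le1 : e <= 1 by rewrite /e ler_pdivrMr // mul1r; lra.
have eD : e * (- f + C + 1) = - f by rewrite /e divfK // gt_eqF.
have /ler_normlW := contract_perturb T u d (ltW e_gt0) e_le1.
have := pos e e_gt0 e_le1.
have : e * C = - f - e * (- f + 1) by rewrite -{1}eD; ring.
have : 0 < e * (- f + 1) by rewrite mulr_gt0 //; lra.
rewrite -/f -/C; lra.
Qed.

End Contraction.

Theorem mainTheorem16 (R : realType) (n r : nat) (T : tensor R n r) :
  (0 < r)%N -> (exists a, T a != 0) ->
  (DP T <->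
   forall u : 'I_r -> vec R n,
     (forall i, timelike (u i) /\ future_pointing (u i)) -> 0 < contract T u).
Proof.
move=> _ [a Ta_neq0]; split=> [DP_T u u_ft | pos u u_cf].
- have : 0 <= contract T u by apply: DP_T => i; apply: future_timelike_causal.
  rewrite le_eqVlt => /orP[/eqP u0|//]; case/eqP: Ta_neq0.
  have := DP_contract_eq0_splice T DP_T r (leqnn r) u u_ft (esym u0) (fun i j => (j == a i)%:R).
  rewrite -(contract_basis T a) => <-.
  by apply: contract_eq => i j; rewrite /splice ltn_ord.
- apply: (contract_ge0_perturb T u (fun _ => e0)) => e e_gt0 _.
  by apply: pos => i; apply: causal_addZ_e0.
Qed.
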